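(* Let $G$ be a directed $st$-graph and let $b$ be a critical node of $G$. Then every $b$-minimal minimal vertex separator of $G$ is $b$-critical.
   Context: A directed $st$-graph $G=(V,E,s,t)$ is a finite directed graph with no self-loops and no parallel edges, with distinct source $s$ (no incoming edges) and sink $t$ (no outgoing edges), such that every vertex lies on some directed walk from $s$ to $t$. A vertex separator is a set $T\subseteq V$ meeting every $s$–$t$ walk; an mvs is an inclusion-minimal one. For $u\in V$, $A\subseteq V$: $u\sqsubseteq A$ if every directed walk from $u$ to $t$ contains a vertex of $A$; $A\sqsubseteq A'$ if $u\sqsubseteq A'$ for all $u\in A$; $A\sqsubset A'$ means $A\sqsubseteq A'$ and $A\neq A'$. An mvs $T$ is $b$-critical if $b\in T$ and there is $a\in T$ (possibly $a=b$) with a directed walk of length at least one from $a$ to $b$; $b$ is a critical node if some mvs is $b$-critical. An mvs $T$ is $b$-minimal if $b\in T$ and $b\notin T'$ for every mvs $T'$ with $T'\sqsubset T$. *)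

(* Directed graphs on a finite vertex type V with edge
   relation E : rel V (a relation has no parallel edges by construction). *)
From mathcomp Require Import all_boot.
Set Implicit Arguments. Unset Strict Implicit. Unset Printing Implicit Defensive.

Section STGraph.
Variable V : finType.
Variable E : rel V.

(* A directed walk from u to v: the vertex sequence u :: p is an E-path
   ending in v.  Its length is size p. *)
Definition walk (u v : V) (p : seq V) : bool := path E u p && (last u p == v).

Definition st_graph (s t : V) : Prop :=
  [/\ irreflexive E, s != t,
      (forall x, ~~ E x s), (forall y, ~~ E t y) &
      (forall v : V, exists p : seq V, walk s t p && (v \in s :: p))].

Definition vsep (s t : V) (T : {set V}) : Prop :=
  forall p, walk s t p -> has (mem T) (s :: p).

Definition mvs (s t : V) (T : {set V}) : Prop :=
  vsep s t T /\ (forall T' : {set V}, T' \subset T -> vsep s t T' -> T' = T).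

Definition vle (t : V) (u : V) (A : {set V}) : Prop :=
  forall p, walk u t p -> has (mem A) (u :: p).

Definition sle (t : V) (A A' : {set V}) : Prop :=
  forall u, u \in A -> vle t u A'.

Definition slt (t : V) (A A' : {set V}) : Prop := sle t A A' /\ A <> A'.

Definition b_critical (s t b : V) (T : {set V}) : Prop :=
  [/\ mvs s t T, b \in T &
      exists a, a \in T /\ exists p, size p >= 1 /\ walk a b p].

Definition critical_node (s t b : V) : Prop :=
  exists T : {set V}, b_critical s t b T.

Definition b_minimal (s t b : V) (T : {set V}) : Prop :=
  [/\ mvs s t T, b \in T &
      forall T' : {set V}, mvs s t T' -> slt t T' T -> b \notin T'].

End STGraph.

From Stdlib Require Import Classical.
From mathcomp Require Import all_boot.

Set Implicit Arguments. Unset Strict Implicit. Unset Printing Implicit Defensive.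

(* Suppose T is b-minimal but no vertex of T reaches b by a nonempty walk, and
   let T0 be b-critical, with a in T0 reaching b.  Let M be the set of first
   entries of s-walks into T :|: T0.  Since both sets are mvs, M is an mvs, and
   M is below T.  Nothing in T reaches b or a, so b and a are first entries
   into T :|: T0 exactly as they are into T0: thus b \in M and a \in M :\: T.
   Hence M is strictly below T and contains b, against b-minimality. *)

Section FirstEntries.
Variables (V : finType) (E : rel V).

Definition tail_avoids (A : {set V}) : rel V := [rel x y | (x \notin A) && E x y].
Definition head_avoids (A : {set V}) : rel V := [rel x y | E x y && (y \notin A)].

Lemma path_tail_avoids (A : {set V}) x p :
  path (tail_avoids A) x p = path E x p && ~~ has (mem A) (belast x p).
Proof.
elim: p x => [|y p IHp] x //=.
by rewrite IHp negb_or /tail_avoids /=; case: (E x y); case: (x \notin A); rewrite ?andbF.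
Qed.

Lemma path_head_avoids (A : {set V}) x p :
  path (head_avoids A) x p = path E x p && ~~ has (mem A) p.
Proof.
elim: p x => [|y p IHp] x //=.
by rewrite IHp negb_or /head_avoids /=; case: (E x y); case: (y \notin A); rewrite ?andbF.
Qed.

Lemma mem_tail_avoids (A : {set V}) x p y :
  path (tail_avoids A) x p -> y \in x :: p -> y \in A -> y = last x p.
Proof.
rewrite path_tail_avoids lastI mem_rcons inE => /andP[_ /hasPn belNA].
by case/orP=> [/eqP // | yb] yA; move: (belNA y yb); rewrite /= yA.
Qed.

Lemma walk_cat x y z p q : walk E x y p -> walk E y z q -> walk E x z (p ++ q).
Proof.
move=> /andP[px /eqP <-] /andP[py qz].
by rewrite /walk cat_path last_cat px py qz.
Qed.

Lemma walk_belast_suffix x p y :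
  path E x p -> y \in belast x p -> exists2 q, 0 < size q & walk E y (last x p) q.
Proof.
elim: p x => [|z p IHp] x //= /andP[Exz pz]; rewrite inE => /orP[/eqP->|yb].
  by exists (z :: p); rewrite // /walk /= Exz pz eqxx.
exact: IHp.
Qed.

Lemma vsep_subset s t (A B : {set V}) : A \subset B -> vsep E s t A -> vsep E s t B.
Proof.
move=> /subsetP sAB sepA p /sepA /hasP[y yp yA].
by apply/hasP; exists y => //; apply: sAB.
Qed.

Definition first_entries s (A : {set V}) : {set V} :=
  [set x in A | connect (tail_avoids A) s x].

Definition last_exits t (A : {set V}) : {set V} :=
  [set x in A | connect (head_avoids A) x t].

Lemma first_entries_sub s (A : {set V}) : first_entries s A \subset A.
Proof. by apply/subsetP => x; rewrite inE => /andP[]. Qed.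

Lemma last_exits_sub t (A : {set V}) : last_exits t A \subset A.
Proof. by apply/subsetP => x; rewrite inE => /andP[]. Qed.

Lemma first_entry_on_path (A : {set V}) x p : path E x p -> has (mem A) (x :: p) ->
  exists2 y, y \in x :: p & y \in first_entries x A.
Proof.
elim: p x => [|z p IHp] x /=.
  by rewrite orbF => _ xA; exists x; rewrite ?mem_head // inE xA connect0.
case/andP=> Exz pz; case: (boolP (x \in A)) => [xA _|xNA /= hasz].
  by exists x; rewrite ?mem_head // inE xA connect0.
have [y yp] := IHp z pz hasz; rewrite inE => /andP[yA zy].
exists y; first by rewrite inE yp orbT.
by rewrite inE yA (connect_trans _ zy) // connect1 //= /tail_avoids /= xNA Exz.
Qed.

Lemma last_exit_on_path (A : {set V}) x p : path E x p -> has (mem A) (x :: p) ->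
  exists2 y, y \in x :: p & y \in last_exits (last x p) A.
Proof.
elim: p x => [|z p IHp] x /=.
  by rewrite orbF => _ xA; exists x; rewrite ?mem_head // inE xA connect0.
case/andP=> Exz pz; case: (boolP (has (mem A) (z :: p))) => [hasz _|hasNz].
  by have [y yp yL] := IHp z pz hasz; exists y; rewrite // inE yp orbT.
rewrite /= in hasNz; rewrite (negbTE hasNz) orbF => xA.
exists x; rewrite ?mem_head // inE xA; apply/connectP; exists (z :: p) => //.
by rewrite path_head_avoids /= Exz pz.
Qed.

Lemma vsep_first_entries s t (A : {set V}) : vsep E s t A -> vsep E s t (first_entries s A).
Proof.
move=> sepA p /[dup] /andP[pE _] /sepA hasA.
by have [y yp yF] := first_entry_on_path pE hasA; apply/hasP; exists y.
Qed.

Lemma vsep_last_exits s t (A : {set V}) : vsep E s t A -> vsep E s t (last_exits t A).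
Proof.
move=> sepA p /[dup] /andP[pE /eqP pt] /sepA hasA.
by have [y yp] := last_exit_on_path pE hasA; rewrite pt => yL; apply/hasP; exists y.
Qed.

Lemma mvs_first_entries s t (T : {set V}) : mvs E s t T -> first_entries s T = T.
Proof. by case=> sepT minT; apply: minT (first_entries_sub s T) (vsep_first_entries sepT). Qed.

Lemma mvs_last_exits s t (T : {set V}) : mvs E s t T -> last_exits t T = T.
Proof. by case=> sepT minT; apply: minT (last_exits_sub t T) (vsep_last_exits sepT). Qed.

Lemma vsep_splice (A C : {set V}) s u t r p : C \subset A -> vsep E s t C ->
  path (tail_avoids A) s r -> last s r = u -> walk E u t p -> has (mem C) (u :: p).
Proof.
move=> /subsetP sCA sepC r_av r_u p_walk.
have r_walk : walk E s u r by move: r_av; rewrite path_tail_avoids /walk r_u eqxx => /andP[->].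
have /hasP[y] := sepC _ (walk_cat r_walk p_walk).
rewrite -cat_cons mem_cat => /orP[yr yC | yp yC]; apply/hasP; exists y => //.
  by rewrite (mem_tail_avoids r_av yr (sCA y yC)) r_u mem_head.
by rewrite inE yp orbT.
Qed.

Lemma first_entries_tight s t (T1 U T' : {set V}) x :
  mvs E s t T1 -> T1 \subset U -> x \in T1 -> x \in first_entries s U ->
  vsep E s t T' -> T' \subset first_entries s U -> x \in T'.
Proof.
(* The s-t walk r ++ q through x meets U only at x and T1 only at x.  If T'
   met it at a later vertex y, a first-entry walk to y followed by the rest of
   q would be an s-t walk avoiding T1. *)
move=> T1mvs sT1U xT1 xF sepT' sT'F.
have [r r_av r_x] : exists2 r, path (tail_avoids U) s r & x = last s r.
  by move: xF; rewrite inE => /andP[_ /connectP].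
have [q q_av q_t] : exists2 q, path (head_avoids T1) x q & t = last x q.
  by move: xT1; rewrite -{1}(mvs_last_exits T1mvs) inE => /andP[_ /connectP].
move: q_av; rewrite path_head_avoids => /andP[qE qNT1].
have q_walk : walk E x t q by rewrite /walk qE q_t eqxx.
have sT'U := subset_trans sT'F (first_entries_sub s U).
have /orP[// | /hasP[y yq yT']] := vsep_splice sT'U sepT' r_av (esym r_x) q_walk.
have [r' r'_av r'_y] : exists2 r', path (tail_avoids U) s r' & y = last s r'.
  by move: (subsetP sT'F y yT'); rewrite inE => /andP[_ /connectP].
case/splitPr: yq qE qNT1 q_t {q_walk} => q1 q2.
rewrite cat_path has_cat last_cat /= !negb_or => /and3P[_ _ q2E] /and3P[_ yNT1 q2NT1] q2_t.
have q2_walk : walk E y t q2 by rewrite /walk q2E q2_t eqxx.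
have := vsep_splice sT1U (proj1 T1mvs) r'_av (esym r'_y) q2_walk.
by rewrite /= (negbTE yNT1) (negbTE q2NT1).
Qed.

Lemma mvs_first_entries_setU s t (T1 T2 : {set V}) :
  mvs E s t T1 -> mvs E s t T2 -> mvs E s t (first_entries s (T1 :|: T2)).
Proof.
move=> T1mvs T2mvs; split.
  exact/vsep_first_entries/(vsep_subset (subsetUl T1 T2))/(proj1 T1mvs).
move=> T' sT'F sepT'; apply/eqP; rewrite eqEsubset sT'F; apply/subsetP => x xF.
have := subsetP (first_entries_sub s (T1 :|: T2)) x xF.
rewrite inE => /orP[xT | xT].
  exact: first_entries_tight T1mvs (subsetUl T1 T2) xT xF sepT' sT'F.
exact: first_entries_tight T2mvs (subsetUr T1 T2) xT xF sepT' sT'F.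
Qed.

Lemma sle_first_entries s t (T U : {set V}) :
  vsep E s t T -> T \subset U -> sle E t (first_entries s U) T.
Proof.
move=> sepT sTU u; rewrite inE => /andP[_ /connectP[r r_av r_u]] p.
exact: vsep_splice sTU sepT r_av (esym r_u).
Qed.

Lemma first_entries_setUl s (A B : {set V}) x : x \in first_entries s B ->
  (forall a p, a \in A -> 0 < size p -> walk E a x p -> False) ->
  x \in first_entries s (A :|: B).
Proof.
rewrite !inE => /andP[xB /connectP[r r_av r_x]] noA_to_x.
rewrite xB orbT; apply/connectP; exists r => //.
move: r_av; rewrite !path_tail_avoids => /andP[rE rNB]; rewrite rE.
apply/hasPn => y yr; rewrite /= inE negb_or (hasPn rNB y yr) andbT.
apply/negP => yA; have [q q_pos] := walk_belast_suffix rE yr.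
by rewrite -r_x; apply: noA_to_x.
Qed.

End FirstEntries.

Theorem theorem3 (V : finType) (E : rel V) (s t b : V) :
  st_graph E s t ->
  critical_node E s t b ->
  forall T : {set V}, b_minimal E s t b T -> b_critical E s t b T.
Proof.
move=> _ [T0 [T0mvs bT0 [a0 [a0T0 [q [q_pos q_walk]]]]]] T [Tmvs bT Tmin].
split => //; apply: NNPP => T_not_crit.
have noT_to_b a p : a \in T -> 0 < size p -> walk E a b p -> False.
  by move=> aT p_pos p_walk; apply: T_not_crit; exists a; split => //; exists p.
have noT_to_a0 a p : a \in T -> 0 < size p -> walk E a a0 p -> False.
  move=> aT p_pos p_walk; apply: (noT_to_b a (p ++ q) aT); last exact: walk_cat p_walk q_walk.
  by rewrite size_cat (leq_trans p_pos) ?leq_addr.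
have a0NT : a0 \notin T by apply/negP => a0T; apply: noT_to_b a0T q_pos q_walk.
set M := first_entries E s (T :|: T0).
have bM : b \in M by apply: first_entries_setUl noT_to_b; rewrite (mvs_first_entries T0mvs).
have a0M : a0 \in M by apply: first_entries_setUl noT_to_a0; rewrite (mvs_first_entries T0mvs).
have M_lt_T : slt E t M T.
  split; first exact: sle_first_entries (proj1 Tmvs) (subsetUl T T0).
  by move=> MT; move: a0NT; rewrite -MT a0M.
by have := Tmin M (mvs_first_entries_setU Tmvs T0mvs) M_lt_T; rewrite bM.
Qed.
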